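(* In the cone setting of the context, for any $h\in\mathcal B_{\mathbb C}$ and all $z\in\mathbb C$ with $|z|<(\sqrt2\|h\|)^{-1}$ we have $e+zh\in\mathcal C_{\mathbb C}$ and \[\delta_{\mathcal C}(e,e+zh)\le\ln\Big(\frac{1+|z|\sqrt2\|h\|}{1-|z|\sqrt2\|h\|}\Big)<\infty.\]
   Context: Cone setting. $V$ is a real topological vector space, $\mathcal S\subset V'$ a set of linear functionals such that $\ell(x)=0$ for all $\ell\in\mathcal S$ implies $x=0$, $C_{\mathbb R}=\{h\in V\setminus\{0\}:\ell(h)\ge0\ \forall\ell\in\mathcal S\}$, and $e\in C_{\mathbb R}$ is such that for every $h\in V$ some $\lambda\ge0$ has $\lambda e-h\in C_{\mathbb R}$. Norm $\|h\|=\inf\{\lambda\ge0:\ell(\lambda e\pm h)\ge0\ \forall\ell\in\mathcal S\}$; $\mathcal B_{\mathbb R}$ the completion of $V$; $\mathcal C_{\mathbb R}=\{h\in\mathcal B_{\mathbb R}\setminus\{0\}:\ell(h)\ge0\ \forall\ell\in\mathcal S\}$; $\mathcal C'_{\mathbb R}=\{\ell\in\mathcal B'_{\mathbb R}:\ell\ge0\text{ on }\mathcal C_{\mathbb R}\}$. $\mathcal S_*$ is the weak-$*$ closure of the convex hull of $\{\lambda\ell:\lambda>0,\ell\in\mathcal S\}$; there exist $m\in\mathcal S_*$, $\kappa\in(0,1)$ with $m(e)=1$ and $m(h)\ge\kappa\|h\|$ on $\mathcal C_{\mathbb R}$. $\mathcal B_{\mathbb C}$ is the complexification (norm $\|x+iy\|=\sup_\theta(\|\Re(e^{i\theta}(x+iy))\|^2+\|\Im(e^{i\theta}(x+iy))\|^2)^{1/2}$),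 real functionals extended complex-linearly. $\mathcal C_{\mathbb C}=\{z(x+iy):z\ne0,x,y\in\mathcal C_{\mathbb R}\}$, $\mathcal C'_{\mathbb C}=\{\ell\in\mathcal B'_{\mathbb C}:\ell(h)\ne0\ \forall h\in\mathcal C_{\mathbb C}\}$. For $h,g\in\mathcal C_{\mathbb C}$, $E(h,g)=\{\ell(h)/\ell(g):\ell\in\mathcal C'_{\mathbb C}\}$ and $\delta_{\mathcal C}(h,g)=\ln\frac{\sup_{z\in E(h,g)}|z|}{\inf_{z\in E(h,g)}|z|}$. *)

From HB Require Import structures.
From mathcomp Require Import all_boot all_order all_algebra.
From mathcomp Require Import all_classical all_reals all_analysis.
From mathcomp Require Import complex.
Set Implicit Arguments. Unset Strict Implicit. Unset Printing Implicit Defensive.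
Import Order.TTheory GRing.Theory Num.Theory.
Import numFieldNormedType.Exports.
Local Open Scope classical_set_scope.
Local Open Scope ring_scope.

Section ConeDefs.
Variable R : realType.

Definition cmod (z : R[i]) : R := Num.sqrt (complex.Re z ^+ 2 + complex.Im z ^+ 2).

Definition is_rlin (U W : lmodType R) (f : U -> W) :=
  forall (a : R) (u v : U), f (a *: u + v) = a *: f u + f v.

Definition in_dual (V : topologicalLmodType R) (l : V -> R) :=
  is_rlin (l : V -> R^o) /\ continuous l.

Section OnV.
Variables (V : topologicalLmodType R) (S : set (V -> R)).

Definition coneV : set V := [set h | h != 0 /\ forall l, S l -> 0 <= l h].

Definition cone_norm (e h : V) : R :=
  inf [set lam : R | 0 <= lam /\
        forall l, S l -> 0 <= l (lam *: e + h) /\ 0 <= l (lam *: e - h)].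

Definition pos_mult : set (V -> R) :=
  [set f | exists lam l, 0 < lam /\ S l /\ f = (fun v => lam * l v)].
Definition conv_hull (A : set (V -> R)) : set (V -> R) :=
  [set f | exists (n : nat) (w : 'I_n.+1 -> R) (g : 'I_n.+1 -> V -> R),
     (forall i, 0 <= w i) /\ \sum_(i < n.+1) w i = 1 /\ (forall i, A (g i)) /\
     f = (fun v => \sum_(i < n.+1) w i * g i v)].

(* A point m of V'
   is in the weak-* closure of a set iff every basic weak-* neighbourhood
   {f : |f v - m v| < eps for v in vs} (vs finite) meets the set. *)
Definition Sstar : set (V -> R) :=
  [set m | in_dual m /\
     forall (vs : seq V) (eps : R), 0 < eps ->
       exists f, conv_hull pos_mult f /\
         forall v, v \in vs -> `|f v - m v| < eps].
End OnV.

Section OnB.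
Variables (V : topologicalLmodType R) (B : completeNormedModType R)
          (iota : V -> B).

Definition ext_of (l : V -> R) (L : B -> R) :=
  is_rlin (L : B -> R^o) /\ continuous L /\ forall v, L (iota v) = l v.

Definition coneB (S : set (V -> R)) : set B :=
  [set h | h != 0 /\ forall l, S l -> forall L, ext_of l L -> 0 <= L h].
End OnB.

Section Complexification.
Variable B : normedModType R.

(* B_C is modelled as pairs (x, y) standing for x + i y *)
Definition cplx_scale (c : R[i]) (u : B * B) : B * B :=
  (complex.Re c *: u.1 - complex.Im c *: u.2,
   complex.Im c *: u.1 + complex.Re c *: u.2).

Definition cnorm (u : B * B) : R :=
  sup [set Num.sqrt (`|cos t *: u.1 - sin t *: u.2| ^+ 2 +
                     `|sin t *: u.1 + cos t *: u.2| ^+ 2) | t in [set: R]].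

Definition in_cdual (L : B * B -> R[i]) :=
  (forall u v, L (u + v) = L u + L v) /\
  (forall c u, L (cplx_scale c u) = c * L u) /\
  (forall u (eps : R), 0 < eps -> exists2 d : R, 0 < d &
     forall v, cnorm (v - u) < d -> cmod (L v - L u) < eps).

Variable CR : set B.

Definition coneC : set (B * B) :=
  [set w | exists c x y, c != 0 /\ CR x /\ CR y /\ w = cplx_scale c (x, y)].

Definition dual_coneC : set (B * B -> R[i]) :=
  [set L | in_cdual L /\ forall w, coneC w -> L w != 0].

Definition Eset (h g : B * B) : set R[i] :=
  [set L h / L g | L in dual_coneC].

Definition deltaC (h g : B * B) : \bar R :=
  let s := ereal_sup [set (cmod z)%:E | z in Eset h g] in
  let i := ereal_inf [set (cmod z)%:E | z in Eset h g] in
  match s, i with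
  | EFin s', EFin i' => if 0 < i' then (ln (s' / i'))%:E else +oo%E
  | _, _ => +oo%E
  end.
End Complexification.

End ConeDefs.

(* The real cone contains the unit ball around e: for ||v|| < 1 and l in S,
   approximating v by elements of V of norm < 1 gives l(e + v) >= 0 in the
   limit.  Hence e + z h = (1 + i)^-1 ((e + u1) + i (e + u2)), where
   u1 + i u2 = (1 + i) z h has both parts of norm <= sqrt 2 |z| ||h|| < 1,
   lies in C_C.
   For L in C'_C and x, y in C_R the numbers L x and L y are never orthogonal
   in the plane: otherwise L x = i t L y with t real, and L kills one of the
   cone elements x + i x, x + i (-t) y or y + i t^-1 x.  Taking x, y = e +- mu v
   with |mu L v| = |L e| makes L x = a + w and L y = a - w orthogonal, so
   |L v| <= |L e| ||v||.  Thus |L h| <= sqrt 2 ||h|| |L e|, and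
   |L(e + z h) / L e| lies in [1 - r, 1 + r].  Finally, the extension M of the
   coercive functional m gives the element x + i y |-> M x + i M y of C'_C,
   so E(e, e + z h) is nonempty. *)

From HB Require Import structures.
From mathcomp Require Import all_boot all_order all_algebra.
From mathcomp Require Import all_classical all_reals all_analysis.
From mathcomp Require Import complex.
From mathcomp Require Import lra ring.
Import Order.TTheory GRing.Theory Num.Theory.
Import numFieldNormedType.Exports.
Local Open Scope classical_set_scope.
Local Open Scope ring_scope.
Set Implicit Arguments.
Unset Strict Implicit.

Section SumOfSquares.
Variable R : realType.

Lemma sqrt_sum_sqr_le (a b : R) : Num.sqrt (a ^+ 2 + b ^+ 2) <= `|a| + `|b|.
Proof.
rewrite -(ger0_norm (addr_ge0 (normr_ge0 a) (normr_ge0 b))) -sqrtr_sqr.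
rewrite ler_sqrt ?sqr_ge0 // -(real_normK (num_real a)) -(real_normK (num_real b)).
have := mulr_ge0 (normr_ge0 a) (normr_ge0 b); nra.
Qed.

Lemma cauchy_schwarz2 (p q x y : R) : 0 <= x -> 0 <= y ->
  `|p| * x + `|q| * y <= Num.sqrt (p ^+ 2 + q ^+ 2) * Num.sqrt (x ^+ 2 + y ^+ 2).
Proof.
move=> x0 y0; rewrite -sqrtrM ?addr_ge0 ?sqr_ge0 //.
have lhs0 : 0 <= `|p| * x + `|q| * y by rewrite addr_ge0 ?mulr_ge0.
rewrite -(ger0_norm lhs0) -sqrtr_sqr ler_sqrt ?mulr_ge0 ?addr_ge0 ?sqr_ge0 //.
rewrite -(real_normK (num_real p)) -(real_normK (num_real q)).
have := sqr_ge0 (`|p| * y - `|q| * x); nra.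
Qed.
End SumOfSquares.

Section ComplexModulus.
Variable R : realType.
Implicit Types z w : R[i].
Local Open Scope complex_scope.

Lemma cmodE z : (cmod z)%:C = `|z|.
Proof. by rewrite normc_def. Qed.

Lemma cmod_ge0 z : 0 <= cmod z.
Proof. exact: sqrtr_ge0. Qed.

Lemma cmodM z w : cmod (z * w) = cmod z * cmod w.
Proof. by apply: complexI; rewrite rmorphM /= !cmodE normrM. Qed.

Lemma cmodV z : cmod z^-1 = (cmod z)^-1.
Proof. by apply: complexI; rewrite fmorphV /= !cmodE normfV. Qed.

Lemma cmodD z w : cmod (z + w) <= cmod z + cmod w.
Proof. by rewrite -lecR rmorphD /= !cmodE ler_normD. Qed.

Lemma cmodB z w : cmod z - cmod w <= cmod (z + w).
Proof.
by rewrite -lecR rmorphB /= !cmodE lerBlDr -[X in `|X| <= _](addrK w z) ler_normB.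
Qed.

Lemma cmod_gt0 z : (0 < cmod z) = (z != 0).
Proof. by rewrite -ltcR cmodE normr_gt0. Qed.

Lemma cmod_ReIm_le z : cmod z <= `|complex.Re z| + `|complex.Im z|.
Proof. exact: sqrt_sum_sqr_le. Qed.

Lemma cmodR (x : R) : cmod x%:C = `|x|.
Proof. by rewrite /cmod /= expr0n addr0 sqrtr_sqr. Qed.

Lemma cmod_i : cmod ('i : R[i]) = 1.
Proof. by rewrite /cmod /= expr0n add0r expr1n sqrtr1. Qed.

Lemma cmod_1i : cmod (1 + 'i : R[i]) = Num.sqrt 2.
Proof. by rewrite /cmod /= add0r addr0 expr1n. Qed.

Lemma Re_mul_conjDB z w :
  complex.Re ((z + w) * (z - w)^*) = cmod z ^+ 2 - cmod w ^+ 2.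
Proof.
case: z w => [a b] [c d]; rewrite /cmod /= !sqr_sqrtr ?addr_ge0 ?sqr_ge0 //.
ring.
Qed.

Lemma Re_mul_conj_eq0 z w : w != 0 -> complex.Re (z * w^*) = 0 ->
  exists t : R, z = 'i * t%:C * w.
Proof.
case: z w => [a b] [c d] w0 /= orth.
have n0 : c ^+ 2 + d ^+ 2 != 0.
  by rewrite -cmod_gt0 /cmod /= sqrtr_gt0 in w0; rewrite gt_eqF.
exists ((b * c - a * d) / (c ^+ 2 + d ^+ 2)); apply/eqP; rewrite eq_complex /=.
apply/andP; split; rewrite -subr_eq0; apply/eqP.
- rewrite (_ : _ - _ = c * (a * c - b * - d) / (c ^+ 2 + d ^+ 2)).
    by rewrite orth mulr0 mul0r.
  by field.
- rewrite (_ : _ - _ = d * (a * c - b * - d) / (c ^+ 2 + d ^+ 2)).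
    by rewrite orth mulr0 mul0r.
  by field.
Qed.
End ComplexModulus.

Section RealLinear.
Variables (R : realType) (U W : lmodType R) (f : U -> W) (f_lin : is_rlin f).

Lemma rlinD : {morph f : u v / u + v}.
Proof. by move=> u v; have := f_lin 1 u v; rewrite !scale1r. Qed.

Lemma rlin0 : f 0 = 0.
Proof. by apply: (addrI (f 0)); rewrite -rlinD !addr0. Qed.

Lemma rlinZ a : {morph f : u / a *: u}.
Proof. by move=> u; rewrite -[a *: u]addr0 f_lin rlin0 addr0. Qed.

Lemma rlinN : {morph f : u / - u}.
Proof. by move=> u; rewrite -scaleN1r rlinZ scaleN1r. Qed.

Lemma rlinB : {morph f : u v / u - v}.
Proof. by move=> u v; rewrite rlinD rlinN. Qed.
End RealLinear.

Lemma rlinZr (R : realType) (U : lmodType R) (f : U -> R^o) (f_lin : is_rlin f) a u :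
  f (a *: u) = a * f u.
Proof. exact: rlinZ. Qed.

Section Complexification.
Variables (R : realType) (B : normedModType R).
Implicit Types (u v : B * B) (x y : B).
Local Open Scope complex_scope.

Lemma cplx_scale1 u : cplx_scale 1 u = u.
Proof. by case: u => x y; rewrite /cplx_scale /= !scale1r !scale0r subr0 add0r. Qed.

Lemma cplx_scaleD c u v : cplx_scale c (u + v) = cplx_scale c u + cplx_scale c v.
Proof.
case: u v => [x1 y1] [x2 y2]; rewrite /cplx_scale /= !scalerDr.
by congr pair; rewrite addrACA // opprD.
Qed.

Lemma cplx_scaleA c d u : cplx_scale c (cplx_scale d u) = cplx_scale (c * d) u.
Proof.
case: c d u => [c1 c2] [d1 d2] [x y]; rewrite /cplx_scale /=.
rewrite !scalerBr !scalerDr !scalerA !scalerBl !scalerDl !opprD.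
congr pair; first by rewrite addrACA.
by rewrite addrACA [_ *: x + _]addrC [- _ + _]addrC [c1 * d2]mulrC [c2 * d2]mulrC.
Qed.

Lemma norm_lincomb_le (a b : R) x y :
  `|a *: x + b *: y| <= Num.sqrt (a ^+ 2 + b ^+ 2) * Num.sqrt (`|x| ^+ 2 + `|y| ^+ 2).
Proof.
apply: le_trans (ler_normD _ _) _; rewrite !normrZ.
exact: cauchy_schwarz2.
Qed.

Lemma norm_pair_le_cnorm x y : Num.sqrt (`|x| ^+ 2 + `|y| ^+ 2) <= cnorm (x, y).
Proof.
rewrite /cnorm; apply: sup_upper_bound; last first.
  by exists 0 => //; rewrite cos0 sin0 !scale1r !scale0r subr0 add0r.
split; first by eexists; exists 0.
exists (2 * (`|x| + `|y|)) => _ [t _ <-].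
have rot (a b : R) : a ^+ 2 + b ^+ 2 = 1 -> `|a *: x + b *: y| <= `|x| + `|y|.
  move=> ab1; apply: le_trans (norm_lincomb_le _ _ _ _) _.
  by rewrite ab1 sqrtr1 mul1r; have := sqrt_sum_sqr_le `|x| `|y|; rewrite !normr_id.
apply: le_trans (sqrt_sum_sqr_le _ _) _; rewrite !normr_id mulr_natl mulr2n.
apply: lerD; last by apply: rot; rewrite addrC cos2Dsin2.
by rewrite -scaleNr; apply: rot; rewrite sqrrN cos2Dsin2.
Qed.

Lemma cplx_scale_norm_le c x y :
  `|(cplx_scale c (x, y)).1| <= cmod c * cnorm (x, y) /\
  `|(cplx_scale c (x, y)).2| <= cmod c * cnorm (x, y).
Proof.
have le_cnorm : 0 <= cmod c -> forall a b : R, a ^+ 2 + b ^+ 2 = cmod c ^+ 2 ->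
    `|a *: x + b *: y| <= cmod c * cnorm (x, y).
  move=> c0 a b ab; apply: le_trans (norm_lincomb_le _ _ _ _) _.
  rewrite ab sqrtr_sqr ger0_norm //; apply: ler_wpM2l => //.
  exact: norm_pair_le_cnorm.
have c2 : cmod c ^+ 2 = complex.Re c ^+ 2 + complex.Im c ^+ 2.
  by rewrite sqr_sqrtr // addr_ge0 ?sqr_ge0.
rewrite /cplx_scale /= -scaleNr; split; apply: le_cnorm; rewrite ?cmod_ge0 //.
- by rewrite sqrrN.
- by rewrite addrC.
Qed.

Lemma norm_fst_le_cnorm x y : `|x| <= cnorm (x, y).
Proof.
apply: le_trans (norm_pair_le_cnorm x y); rewrite -[leLHS]normr_id -sqrtr_sqr.
by rewrite ler_sqrt ?addr_ge0 ?sqr_ge0 // lerDl sqr_ge0.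
Qed.

Lemma norm_snd_le_cnorm x y : `|y| <= cnorm (x, y).
Proof.
apply: le_trans (norm_pair_le_cnorm x y); rewrite -[leLHS]normr_id -sqrtr_sqr.
by rewrite ler_sqrt ?addr_ge0 ?sqr_ge0 // lerDr sqr_ge0.
Qed.

Lemma cnorm_ge0 u : 0 <= cnorm u.
Proof. by case: u => x y; apply: le_trans (sqrtr_ge0 _) (norm_pair_le_cnorm x y). Qed.

Section ComplexLinearFunctional.
Variables (L : B * B -> R[i]) (L_lin : in_cdual L).

Lemma cdualD u v : L (u + v) = L u + L v.
Proof. exact: L_lin.1. Qed.

Lemma cdualZ c u : L (cplx_scale c u) = c * L u.
Proof. exact: L_lin.2.1. Qed.

Lemma cdual_pair x y : L (x, y) = L (x, 0) + 'i * L (y, 0).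
Proof.
rewrite -cdualZ -cdualD /cplx_scale /= !scale0r !scale1r.
by congr L; apply/eqP; rewrite xpair_eqE /= subrr !addr0 add0r !eqxx.
Qed.

Lemma cdual_realD x y : L (x + y, 0) = L (x, 0) + L (y, 0).
Proof. by rewrite -cdualD; congr L; apply/eqP; rewrite xpair_eqE /= addr0 !eqxx. Qed.

Lemma cdual_realZ (a : R) x : L (a *: x, 0) = a%:C * L (x, 0).
Proof. by rewrite -cdualZ /cplx_scale /= !scale0r !scaler0 subr0 addr0. Qed.
End ComplexLinearFunctional.
End Complexification.

Section ConeWithInteriorPoint.
Variables (R : realType) (B : normedModType R) (CR : set B) (E : B).
Hypothesis CR_scale : forall (lam : R) x, 0 < lam -> CR x -> CR (lam *: x).
Hypothesis CR_ball : forall v, `|v| < 1 -> CR (E + v).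
Local Open Scope complex_scope.

Lemma CR_center : CR E.
Proof. by rewrite -[E]addr0; apply: CR_ball; rewrite normr0. Qed.

Lemma coneC_pair x y : CR x -> CR y -> coneC CR (x, y).
Proof. by move=> Cx Cy; exists 1, x, y; rewrite oner_neq0 cplx_scale1. Qed.

Lemma coneC_perturb z h : cmod z * Num.sqrt 2 * cnorm h < 1 ->
  coneC CR ((E, 0) + cplx_scale z h).
Proof.
case: h => h1 h2 small; set c : R[i] := 1 + 'i.
have c0 : c != 0 by rewrite -cmod_gt0 cmod_1i sqrtr_gt0.
set u := cplx_scale (c * z) (h1, h2).
have [u1 u2] := cplx_scale_norm_le (c * z) h1 h2.
have small' : cmod (c * z) * cnorm (h1, h2) < 1.
  by rewrite cmodM cmod_1i [Num.sqrt 2 * _]mulrC.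
exists c^-1, (E + u.1), (E + u.2); split; first by rewrite invr_eq0.
split; first by apply: CR_ball; apply: le_lt_trans small'.
split; first by apply: CR_ball; apply: le_lt_trans small'.
have -> : (E + u.1, E + u.2) = cplx_scale c ((E, 0) + cplx_scale z (h1, h2)).
  rewrite cplx_scaleD cplx_scaleA /cplx_scale /= addr0 add0r !scale1r subr0 addr0.
  by apply/eqP; rewrite xpair_eqE !eqxx.
by rewrite cplx_scaleA mulVf // cplx_scale1.
Qed.

Section DualCone.
Variables (L : B * B -> R[i]) (L_dual : dual_coneC CR L).
Let L_lin : in_cdual L := L_dual.1.

Lemma dual_coneC_pair_neq0 x y : CR x -> CR y -> L (x, 0) + 'i * L (y, 0) != 0.
Proof. by move=> Cx Cy; rewrite -cdual_pair //; apply: L_dual.2; apply: coneC_pair. Qed.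

Lemma dual_coneC_neq0 x : CR x -> L (x, 0) != 0.
Proof.
move=> Cx; have := dual_coneC_pair_neq0 Cx Cx.
by rewrite -[X in X + _]mul1r -mulrDl mulf_eq0 negb_or => /andP [].
Qed.

Lemma dual_coneC_not_imag x y (t : R) : CR x -> CR y ->
  L (x, 0) != 'i * t%:C * L (y, 0).
Proof.
move=> Cx Cy; apply/eqP => Lxy.
have [tneg|tpos|t0] := ltgtP t 0.
- have nt : 0 < - t by rewrite oppr_gt0.
  have := dual_coneC_pair_neq0 Cx (CR_scale nt Cy).
  by rewrite cdual_realZ // Lxy rmorphN /= mulNr mulrN mulrA subrr eqxx.
- have it : 0 < t^-1 by rewrite invr_gt0.
  have := dual_coneC_pair_neq0 Cy (CR_scale it Cx).
  rewrite cdual_realZ // Lxy.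
  have -> : forall w a b : R[i], 'i * (a * ('i * b * w)) = 'i ^+ 2 * (a * b) * w.
    by move=> w a b; ring.
  by rewrite sqr_i -rmorphM (mulVf (lt0r_neq0 tpos)) rmorph1 mulr1 mulN1r subrr eqxx.
- by move: (dual_coneC_neq0 Cx); rewrite Lxy t0 rmorph0 mulr0 mul0r eqxx.
Qed.

Lemma dual_coneC_not_orth x y : CR x -> CR y ->
  complex.Re (L (x, 0) * (L (y, 0))^*) != 0.
Proof.
move=> Cx Cy; apply/eqP => /(Re_mul_conj_eq0 (dual_coneC_neq0 Cy)) [t].
exact/eqP/dual_coneC_not_imag.
Qed.

Lemma dual_coneC_real_le v : cmod (L (v, 0)) <= cmod (L (E, 0)) * `|v|.
Proof.
set a := L (E, 0); set b := L (v, 0); rewrite leNgt; apply/negP => big.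
have b0 : 0 < cmod b by apply: le_lt_trans big; rewrite mulr_ge0 ?cmod_ge0.
set mu := cmod a / cmod b.
have mu0 : 0 <= mu by rewrite divr_ge0 ?cmod_ge0.
have mu_small : `|mu *: v| < 1.
  by rewrite normrZ ger0_norm // mulrAC ltr_pdivrMr // mul1r.
have Cx := CR_ball mu_small.
have Cy : CR (E + (- mu) *: v) by apply: CR_ball; rewrite scaleNr normrN.
have cw : cmod (mu%:C * b) = cmod a.
  by rewrite cmodM cmodR ger0_norm // divfK ?gt_eqF.
have := dual_coneC_not_orth Cx Cy.
rewrite !cdual_realD // !cdual_realZ // rmorphN /= mulNr -/a -/b.
by rewrite Re_mul_conjDB cw subrr eqxx.
Qed.

Lemma dual_coneC_le h : cmod (L h) <= cmod (L (E, 0)) * (Num.sqrt 2 * cnorm h).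
Proof.
case: h => h1 h2; rewrite cdual_pair //; apply: le_trans (cmodD _ _) _.
rewrite cmodM cmod_i mul1r; apply: le_trans (lerD (dual_coneC_real_le h1)
  (dual_coneC_real_le h2)) _.
rewrite -mulrDr; apply: ler_wpM2l; first exact: cmod_ge0.
have := cauchy_schwarz2 1 1 (normr_ge0 h1) (normr_ge0 h2).
rewrite normr1 !mul1r expr1n -mulr2n => /le_trans; apply.
by apply: ler_wpM2l; [exact: sqrtr_ge0 | exact: norm_pair_le_cnorm].
Qed.

Lemma dual_coneC_ratio_bounds z h : cmod z * Num.sqrt 2 * cnorm h < 1 ->
  (1 + cmod z * Num.sqrt 2 * cnorm h)^-1 <=
    cmod (L (E, 0) / L ((E, 0) + cplx_scale z h)) <=
  (1 - cmod z * Num.sqrt 2 * cnorm h)^-1.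
Proof.
set r := cmod z * Num.sqrt 2 * cnorm h => r1.
have r0 : 0 <= r by rewrite !mulr_ge0 ?cmod_ge0 ?sqrtr_ge0 ?cnorm_ge0.
set a := L (E, 0); set w := z * L h.
have a0 : 0 < cmod a by rewrite cmod_gt0; apply: dual_coneC_neq0; exact: CR_center.
have w_le : cmod w <= r * cmod a.
  rewrite cmodM /r -!mulrA; apply: ler_wpM2l; first exact: cmod_ge0.
  by rewrite mulrA [X in _ <= X]mulrC; apply: dual_coneC_le.
have -> : L ((E, 0) + cplx_scale z h) = a + w by rewrite cdualD // cdualZ.
have up : cmod (a + w) <= cmod a * (1 + r).
  by apply: le_trans (cmodD _ _) _; rewrite mulrDr mulr1 lerD2l mulrC.
have lo : cmod a * (1 - r) <= cmod (a + w).
  by apply: le_trans (cmodB _ _); rewrite mulrBr mulr1 lerD2l lerN2 mulrC.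
have aw0 : 0 < cmod (a + w).
  by apply: lt_le_trans lo; rewrite mulr_gt0 // subr_gt0.
rewrite cmodM cmodV; apply/andP; split.
- by rewrite ler_pdivlMr // mulrC ler_pdivrMr // ltr_pwDl.
- by rewrite ler_pdivrMr // mulrC ler_pdivlMr // subr_gt0.
Qed.
End DualCone.
End ConeWithInteriorPoint.

Section CoerciveFunctional.
Variables (R : realType) (B : normedModType R) (CR : set B).
Variables (M : B -> R) (kappa : R).
Hypotheses (M_lin : is_rlin (M : B -> R^o)) (M_cont : continuous M).
Hypotheses (kappa_gt0 : 0 < kappa) (M_coercive : forall x, CR x -> kappa * `|x| <= M x).
Hypothesis CR_neq0 : forall x, CR x -> x != 0.
Local Open Scope complex_scope.

Let LM (w : B * B) : R[i] := M w.1 +i* M w.2.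

Lemma coercive_cdual : in_cdual LM.
Proof.
have LMD u v : LM (u + v) = LM u + LM v by rewrite /LM /= !(rlinD M_lin).
split=> //; split.
  move=> [c1 c2] [x y]; rewrite /LM /cplx_scale /=.
  rewrite (rlinB M_lin) (rlinD M_lin) !(rlinZr M_lin).
  by apply/eqP; rewrite eq_complex /=; apply/andP; split; apply/eqP; ring.
move=> u eps eps0; have eps2 : 0 < eps / 2 by rewrite divr_gt0.
have /nbhs_ballP [d d0 Md] : \forall b \near (0 : B), `|M 0 - M b| < eps / 2.
  by apply: cvgr_dist_lt => //; exact: M_cont.
exists d => // v uv.
have M_small (b : B) : `|b| <= cnorm (v - u) -> `|M b| < eps / 2.
  move=> b_le; have := Md b; rewrite (rlin0 M_lin) sub0r normrN; apply.
  by rewrite -ball_normE /ball_ /= sub0r normrN; apply: le_lt_trans uv.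
have -> : LM v - LM u = LM (v - u) by rewrite -[v in LHS](subrK u) LMD addrK.
apply: le_lt_trans (cmod_ReIm_le _) _.
case: (v - u) M_small => x y M_small /=.
have := M_small _ (norm_fst_le_cnorm x y); have := M_small _ (norm_snd_le_cnorm x y).
lra.
Qed.

Lemma coercive_dual_coneC : dual_coneC CR LM.
Proof.
split; first exact: coercive_cdual.
move=> _ [c [x [y [c0 [Cx [_ ->]]]]]]; rewrite cdualZ ?mulf_neq0 //.
  apply/eqP => -[Mx0 _]; have := M_coercive Cx; rewrite Mx0 leNgt pmulr_rgt0 //.
  by rewrite normr_gt0 CR_neq0.
exact: coercive_cdual.
Qed.
End CoerciveFunctional.

Lemma deltaC_le_ln (R : realType) (B : normedModType R) (CR : set B)
    (u v : B * B) (lo hi : R) :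
  0 < lo -> Eset CR u v !=set0 ->
  (forall q, Eset CR u v q -> lo <= cmod q <= hi) ->
  (deltaC CR u v <= (ln (hi / lo))%:E)%E.
Proof.
move=> lo0 [q0 Eq0] bnd; rewrite /deltaC.
set T := [set (cmod q)%:E | q in Eset CR u v].
have Tbnd t : T t -> (lo%:E <= t <= hi%:E)%E.
  by move=> [q /bnd qb <-]; rewrite !lee_fin.
have [/andP [lo_q0 q0_hi]] : (lo%:E <= (cmod q0)%:E <= hi%:E)%E by apply: Tbnd; exists q0.
have sup_le : (ereal_sup T <= hi%:E)%E by apply: ge_ereal_sup => t /Tbnd /andP [].
have sup_ge : (lo%:E <= ereal_sup T)%E.
  by apply: le_trans lo_q0 _; apply: ereal_sup_ubound; exists q0.
have inf_ge : (lo%:E <= ereal_inf T)%E by apply: le_ereal_inf_tmp => t /Tbnd /andP [].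
have inf_le : (ereal_inf T <= hi%:E)%E.
  by apply: le_trans q0_hi; apply: ereal_inf_lbound; exists q0.
move: sup_le sup_ge inf_ge inf_le.
case: (ereal_sup T) => [s| |] //; case: (ereal_inf T) => [i| |] //.
rewrite !lee_fin => s_le s_ge i_ge _; have i0 : 0 < i by apply: lt_le_trans i_ge.
have s0 : 0 < s by apply: lt_le_trans s_ge.
rewrite i0 lee_fin ler_ln ?posrE ?divr_gt0 //; last exact: lt_le_trans s_le.
by apply: ler_pM s_le _; rewrite ?invr_ge0 ?(ltW s0) ?(ltW i0) // lef_pV2 ?posrE.
Qed.

Lemma coneB_scale (R : realType) (V : topologicalLmodType R) (S : set (V -> R))
    (B : completeNormedModType R) (iota : V -> B) (lam : R) (x : B) :
  0 < lam -> coneB iota S x -> coneB iota S (lam *: x).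
Proof.
move=> lam0 [x0 Cx]; split; first by rewrite scaler_eq0 negb_or x0 gt_eqF.
move=> l Sl L L_ext; rewrite (rlinZr L_ext.1) mulr_ge0 ?(ltW lam0) //.
exact: Cx Sl _ L_ext.
Qed.

Section RealCone.
Variables (R : realType) (V : topologicalLmodType R) (S : set (V -> R)).
Hypothesis HS : forall l, S l -> in_dual l.
Hypothesis Hsep : forall x : V, (forall l, S l -> l x = 0) -> x = 0.
Variable e : V.
Hypothesis He : coneV S e.
Hypothesis Hunit : forall h : V, exists lam : R, 0 <= lam /\ coneV S (lam *: e - h).

Let S_lin l (Sl : S l) : is_rlin (l : V -> R^o) := (HS Sl).1.

Lemma cone_norm_ge1 : 1 <= cone_norm S e e.
Proof.
have : ~ (forall l, S l -> l e = 0) by move=> /Hsep e0; case: He; rewrite e0 eqxx.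
move=> /existsNP [l /not_implyP [Sl /eqP le0]].
have le_gt0 : 0 < l e by rewrite lt_def le0 He.2.
apply: lb_le_inf.
  exists 1; split => // l' Sl'; have le'0 := He.2 l' Sl'.
  by rewrite scale1r subrr (rlin0 (S_lin Sl')) (rlinD (S_lin Sl')) addr_ge0.
move=> lam [_ /(_ l Sl) [_]]; rewrite (rlinB (S_lin Sl)) (rlinZr (S_lin Sl)).
by rewrite -[X in _ - X]mul1r -mulrBl pmulr_lge0 // subr_ge0.
Qed.

Lemma cone_norm_lt1_ge0 w l : cone_norm S e w < 1 -> S l -> 0 <= l (e + w).
Proof.
move=> /inf_lt [].
  have [lam1 [lam1_ge0 [_ C1]]] := Hunit w.
  have [lam2 [lam2_ge0 [_ C2]]] := Hunit (- w).
  exists (lam1 + lam2); split; first by rewrite addr_ge0.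
  move=> l' Sl'; have l'_lin := S_lin Sl'.
  have := C1 l' Sl'; have := C2 l' Sl'; have := mulr_ge0 lam1_ge0 (He.2 l' Sl').
  have := mulr_ge0 lam2_ge0 (He.2 l' Sl').
  rewrite !(rlinB l'_lin) (rlinD l'_lin) (rlinN l'_lin) !(rlinZr l'_lin) mulrDl.
  by split; lra.
move=> lam [_ C] lam_lt1 Sl; have [pos _] := C l Sl.
have l_lin := S_lin Sl; move: pos; rewrite !(rlinD l_lin) (rlinZr l_lin).
have : lam * l e <= l e by rewrite ler_piMl ?He.2 // ltW.
lra.
Qed.

Variables (B : completeNormedModType R) (iota : V -> B).
Hypothesis Hnorm : forall v, `|iota v| = cone_norm S e v.
Hypothesis Hdense : forall (b : B) (eps : R), 0 < eps -> exists v, `|b - iota v| < eps.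

Lemma coneB_ball v : `|v| < 1 -> coneB iota S (iota e + v).
Proof.
move=> v_lt1; split.
  rewrite addr_eq0; apply/eqP => v_e; move: v_lt1.
  by rewrite -normrN -v_e Hnorm ltNge cone_norm_ge1.
move=> l Sl L [L_lin [L_cont L_ext]]; rewrite leNgt; apply/negP => L_neg.
have L_cvg : (fun b => L (iota e + b)) @ v --> L (iota e + v).
  apply: continuous_comp; last exact: L_cont.
  by apply: cvgD; [exact: cvg_cst | exact: cvg_id].
have : \forall b \near v, L (iota e + b) < 0 /\ `|b| < 1.
  apply/near_andP; split; first exact: (cvgr_lt _ L_cvg _ L_neg).
  exact: (cvgr_lt _ (@norm_continuous _ _ v) _ v_lt1).
move=> /nbhs_ballP [d d0 near_v]; have [w vw] := Hdense v d0.
have [Lw_neg w_lt1] : L (iota e + iota w) < 0 /\ `|iota w| < 1.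
  by apply: near_v; rewrite -ball_normE.
move: Lw_neg; rewrite ltNge (rlinD L_lin) !L_ext -(rlinD (S_lin Sl)) => /negP; apply.
by apply: cone_norm_lt1_ge0; rewrite // -Hnorm.
Qed.
End RealCone.

Unset Implicit Arguments.

Theorem lemma5p13 (R : realType) (V : topologicalLmodType R)
  (S : set (V -> R))
  (HS : forall l, S l -> in_dual l)
  (Hsep : forall x : V, (forall l, S l -> l x = 0) -> x = 0)
  (e : V) (He : coneV S e)
  (Hunit : forall h : V, exists lam : R, 0 <= lam /\ coneV S (lam *: e - h))
  (B : completeNormedModType R) (iota : V -> B)
  (Hiota : is_rlin iota)
  (Hnorm : forall v, `|iota v| = cone_norm S e v)
  (Hdense : forall (b : B) (eps : R), 0 < eps -> exists v, `|b - iota v| < eps)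
  (Hm : exists (m : V -> R) (M : B -> R) (kappa : R),
      Sstar S m /\ ext_of iota m M /\ m e = 1 /\ 0 < kappa < 1 /\
      forall h, coneB iota S h -> kappa * `|h| <= M h)
  (h : B * B) (z : R[i])
  (Hz : cmod z * Num.sqrt 2 * cnorm h < 1) :
  let e' : B * B := (iota e, 0) in
  let r := cmod z * Num.sqrt 2 * cnorm h in
  coneC (coneB iota S) (e' + cplx_scale z h) /\
  (deltaC (coneB iota S) e' (e' + cplx_scale z h)%R <= (ln ((1 + r) / (1 - r)))%:E)%E /\
  (deltaC (coneB iota S) e' (e' + cplx_scale z h)%R < +oo)%E.
Proof.
move=> e' r.
have [m [M [kappa [_ [[M_lin [M_cont _]] [_ [/andP [kappa_gt0 _] M_coercive]]]]]]] := Hm.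
have C_ball := coneB_ball HS Hsep He Hunit Hnorm Hdense.
have C_scale := @coneB_scale R V S B iota.
have r_ge0 : 0 <= r by rewrite !mulr_ge0 ?cmod_ge0 ?sqrtr_ge0 ?cnorm_ge0.
have r_lt1 : r < 1 := Hz.
have rp_gt0 : 0 < 1 + r by lra.
have rm_gt0 : 0 < 1 - r by lra.
split; first exact: coneC_perturb.
have LM_dual := coercive_dual_coneC M_lin M_cont kappa_gt0 M_coercive (fun x Cx => Cx.1).
have delta_le : (deltaC (coneB iota S) e' (e' + cplx_scale z h)%R <=
    (ln ((1 - r)^-1 / (1 + r)^-1))%:E)%E.
  apply: deltaC_le_ln; rewrite ?invr_gt0 //.
    by eexists; exists (fun w => (M w.1 +i* M w.2)%C).
  by move=> _ [L L_dual <-]; exact: (dual_coneC_ratio_bounds C_scale C_ball L_dual Hz).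
have -> : (1 + r) / (1 - r) = (1 - r)^-1 / (1 + r)^-1.
  by field; rewrite !gt_eqF.
by split => //; apply: le_lt_trans delta_le (ltry _).
Qed.
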